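(* Let $A$ be a Noetherian commutative ring with identity, let $A[\mathbf{x}]=A[x_1,\ldots,x_n]$ be equipped with a monomial order, let $I\subset A[\mathbf{x}]$ be an ideal, let $p\subset A$ be a prime, and let $B=A_p/(I\cap A)_p$. If for each monomial $\mathbf{x}^E$ the ideal $\mathrm{in}(I)_E\,B$ is either $(0)$ or $(1)$, then $$\mathrm{in}(I)\,k(p)[\mathbf{x}]=\mathrm{in}(I\,k(p)[\mathbf{x}]).$$
   Context: A monomial order $>$ is a total order on monomials such that $\mathbf{x}^E>\mathbf{x}^F$ implies $\mathbf{x}^G\mathbf{x}^E>\mathbf{x}^G\mathbf{x}^F$, and $x_i>1$ for each $i$. $\mathrm{in}(f)$ is the greatest term $c\,\mathbf{x}^E$ ($c\neq0$) of a nonzero polynomial $f$; $\mathrm{in}(I)$ is the ideal generated by all $\mathrm{in}(f)$, $f\in I$. For an ideal $J\subset A[\mathbf{x}]$ and exponent $E$, the coefficient ideal is $J_E=(c\in A\mid c\,\mathbf{x}^E\in J)$; $J_E B$ is the ideal of $B$ generated by its image. $k(p)=A_p/pA_p$ is the residue field of $p$, and $K\,k(p)[\mathbf{x}]$ denotes the ideal generated by the image of $K\subset A[\mathbf{x}]$ under the coefficientwise map $A\to k(p)$. *)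

From HB Require Import structures.
From mathcomp Require Import all_boot all_order all_algebra.
From mathcomp Require Export mpoly.
Set Implicit Arguments. Unset Strict Implicit. Unset Printing Implicit Defensive.
Import Order.TTheory GRing.Theory.
Local Open Scope ring_scope.

Definition is_ideal (R : comPzRingType) (J : R -> Prop) : Prop :=
  [/\ J 0, (forall x y, J x -> J y -> J (x + y)) & (forall r x, J x -> J (r * x))].

Definition ideal_gen (R : comPzRingType) (S : R -> Prop) : R -> Prop :=
  fun x => exists (k : nat) (r s : 'I_k -> R),
      (forall i, S (s i)) /\ x = \sum_(i < k) r i * s i.

Definition is_prime_ideal (R : comPzRingType) (P : R -> Prop) : Prop :=
  [/\ is_ideal P, ~ P 1 & forall a b, P (a * b) -> P a \/ P b].

Definition noetherian (R : comPzRingType) : Prop :=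
  forall J : R -> Prop, is_ideal J ->
    exists s : seq R, forall x, J x <-> ideal_gen (fun y => y \in s) x.

Definition monomial_order (n : nat) (lt : rel 'X_{1..n}) : Prop :=
  [/\ (forall m, ~~ lt m m),
      (forall m1 m2 m3, lt m1 m2 -> lt m2 m3 -> lt m1 m3),
      (forall m1 m2, m1 != m2 -> lt m1 m2 || lt m2 m1),
      (forall g e f, lt f e -> lt (g + f)%MM (g + e)%MM) &
      (forall i : 'I_n, lt 0%MM U_(i)%MM)].

Definition greatest_mono (n : nat) (R : nzRingType) (lt : rel 'X_{1..n})
    (f : {mpoly R[n]}) (m : 'X_{1..n}) : bool :=
  (m \in msupp f) && all (fun m' => (m' == m) || lt m' m) (msupp f).

(* in(f): the greatest term c x^E of f (and 0 for f = 0). *)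
Definition init_term (n : nat) (R : nzRingType) (lt : rel 'X_{1..n})
    (f : {mpoly R[n]}) : {mpoly R[n]} :=
  \sum_(m <- msupp f | greatest_mono lt f m) f@_m *: 'X_[m].

Definition init_ideal (n : nat) (R : comNzRingType) (lt : rel 'X_{1..n})
    (I : {mpoly R[n]} -> Prop) : {mpoly R[n]} -> Prop :=
  ideal_gen (fun g => exists f, I f /\ f != 0 /\ g = init_term lt f).

Definition coef_ideal (n : nat) (R : comNzRingType)
    (J : {mpoly R[n]} -> Prop) (E : 'X_{1..n}) : R -> Prop :=
  ideal_gen (fun c => J (c *: 'X_[E])).

Definition ext_ideal (R S : comPzRingType) (f : R -> S) (J : R -> Prop) : S -> Prop :=
  ideal_gen (fun y => exists x, J x /\ y = f x).

Definition ext_mpoly_ideal (n : nat) (R S : comNzRingType) (phi : {rmorphism R -> S})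
    (J : {mpoly R[n]} -> Prop) : {mpoly S[n]} -> Prop :=
  ext_ideal (map_mpoly phi) J.

(* (B, psi) is (isomorphic to) A_p / (I ∩ A)_p with psi the canonical map:
   elements outside p become units, the kernel is exactly
   {a | a/1 ∈ (I∩A)_p} = {a | exists s ∉ p, s a ∈ I ∩ A},
   and every element of B is of the form psi(a) psi(s)^-1 with s ∉ p. *)
Definition is_loc_quot (n : nat) (A : comNzRingType) (P : A -> Prop)
    (I : {mpoly A[n]} -> Prop) (B : comPzRingType) (psi : {rmorphism A -> B}) : Prop :=
  [/\ (forall s, ~ P s -> exists t, psi s * t = 1),
      (forall a, psi a = 0 <-> exists s, ~ P s /\ I ((s * a)%:MP)) &
      (forall b, exists a s, ~ P s /\ b * psi s = psi a)].

(* (K, phi) is (isomorphic to) the residue field k(p) = A_p / pA_p with phi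
   the canonical map: kernel exactly p, and K = {phi(a)/phi(s) | s ∉ p}. *)
Definition is_residue_field (A : comNzRingType) (P : A -> Prop)
    (K : fieldType) (phi : {rmorphism A -> K}) : Prop :=
  (forall a, phi a = 0 <-> P a) /\
  (forall k, exists a s, ~ P s /\ k * phi s = phi a).

(* The inclusion in(I) k(p)[x] ⊆ in(I k(p)[x]) holds for any ring map: the image
   of in(f) is either 0 or in(φ f).  Conversely, let g ∈ I k(p)[x] have leading
   monomial x^E; clearing denominators, φ(f) = φ(s) g with f ∈ I and s ∉ p, so the
   terms of f above x^E have coefficients in p.  Remove the highest one, c x^E':
   c x^E' ∈ in(I), and by hypothesis either in(I)_E' B = 0, so t c ∈ I for some
   t ∉ p and f can be replaced by t f - t c x^E', or in(I)_E' B = B, so some d ∉ p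
   is the top coefficient of an f2 ∈ I without terms above x^E', and f can be
   replaced by d f - c f2.  Neither step changes φ(f) up to a unit, and the process
   stops because monomial orders are well-founded (Dickson's lemma).  It ends with
   f' ∈ I whose leading term f'_E x^E has φ(f'_E) ≠ 0, whence in(g) ∈ in(I) k(p)[x]. *)

From HB Require Import structures.
From mathcomp Require Import all_boot all_order all_algebra.
From mathcomp Require Import mpoly.
From Stdlib Require Import Classical ClassicalEpsilon.
Set Implicit Arguments. Unset Strict Implicit. Unset Printing Implicit Defensive.
Import Order.TTheory GRing.Theory.
Local Open Scope ring_scope.

Section Ideal.
Variables (R : comPzRingType) (J : R -> Prop).
Hypothesis idJ : is_ideal J.

Lemma ideal0 : J 0. Proof. by case: idJ. Qed.

Lemma idealD x y : J x -> J y -> J (x + y). Proof. by case: idJ => _ + _; apply. Qed.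

Lemma idealMl r x : J x -> J (r * x). Proof. by case: idJ => _ _; apply. Qed.

Lemma idealMr x r : J x -> J (x * r). Proof. by rewrite mulrC; apply: idealMl. Qed.

Lemma idealB x y : J x -> J y -> J (x - y).
Proof. by move=> Jx Jy; apply: idealD => //; rewrite -mulN1r; apply: idealMl. Qed.

End Ideal.

Section PrimeIdeal.
Variables (R : comPzRingType) (P : R -> Prop).
Hypothesis primeP : is_prime_ideal P.

Lemma prime_ideal_ideal : is_ideal P. Proof. by case: primeP. Qed.

Lemma prime_nmem1 : ~ P 1. Proof. by case: primeP. Qed.

Lemma prime_nmemM a b : ~ P a -> ~ P b -> ~ P (a * b).
Proof. by case: primeP => _ _ PM nPa nPb /PM[]. Qed.

End PrimeIdeal.

Section IdealGen.
Variable R : comPzRingType.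
Implicit Types S J : R -> Prop.

Lemma mem_ideal_gen S x : S x -> ideal_gen S x.
Proof.
by move=> Sx; exists 1%N, (fun=> 1), (fun=> x); split=> //; rewrite big_ord1 mul1r.
Qed.

Lemma ideal_gen_ideal S : is_ideal (ideal_gen S).
Proof.
split.
- by exists 0%N, (fun=> 0), (fun=> 0); split=> [[]|]; rewrite ?big_ord0.
- move=> x y [k1 [r1 [s1 [S1 ->]]]] [k2 [r2 [s2 [S2 ->]]]].
  exists (k1 + k2)%N, (fun i => match split i with inl j => r1 j | inr j => r2 j end).
  exists (fun i => match split i with inl j => s1 j | inr j => s2 j end).
  split; first by move=> i; case: (split i).
  rewrite big_split_ord; congr (_ + _); apply: eq_bigr => i _.
    by rewrite -[lshift _ _]/(unsplit (inl i)) unsplitK.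
  by rewrite -[rshift _ _]/(unsplit (inr i)) unsplitK.
- move=> r x [k [r1 [s1 [S1 ->]]]]; exists k, (fun i => r * r1 i), s1.
  by split=> //; rewrite mulr_sumr; apply: eq_bigr => i _; rewrite mulrA.
Qed.

Lemma ideal_gen_min S J : is_ideal J -> (forall x, S x -> J x) ->
  forall x, ideal_gen S x -> J x.
Proof.
move=> idJ SJ x [k [r [s [Ss ->]]]].
by apply: big_ind => [|y z|i _]; [exact: ideal0 | exact: idealD | exact/(idealMl idJ)/SJ].
Qed.

End IdealGen.

Lemma ext_ideal_sub (R S : comPzRingType) (f : R -> S) (C C' : R -> Prop) y :
  (forall x, C x -> C' x) -> ext_ideal f C y -> ext_ideal f C' y.
Proof.
move=> CC'; apply: ideal_gen_min; first exact: ideal_gen_ideal.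
by move=> _ [x [Cx ->]]; apply: mem_ideal_gen; exists x; split => //; apply: CC'.
Qed.

Lemma preim_ideal (R S : comPzRingType) (f : {rmorphism R -> S}) (J : S -> Prop) :
  is_ideal J -> is_ideal (fun x => J (f x)).
Proof.
move=> idJ; split=> [|x y Jx Jy|r x Jx]; rewrite ?rmorph0 ?rmorphD ?rmorphM.
- exact: ideal0.
- exact: idealD.
- exact: idealMl.
Qed.

Lemma ex_min_after (u : nat -> nat) j :
  exists i, (j < i)%N /\ forall k, (j < k)%N -> (u i <= u k)%N.
Proof.
suff min_from v i : (j < i)%N -> u i = v ->
    exists i, (j < i)%N /\ forall k, (j < k)%N -> (u i <= u k)%N.
  exact: (min_from _ j.+1).
elim/ltn_ind: v i => v IH i ji uiv.
have [i_min|] := classic (forall k, (j < k)%N -> (u i <= u k)%N); first by exists i.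
move=> /not_all_ex_not[k] /(imply_to_and (j < k)%N)[jk /negP].
by rewrite -ltnNge uiv => /IH/(_ k jk); apply.
Qed.

Lemma nondecreasing_subseq (u : nat -> nat) : exists sigma : nat -> nat,
  (forall k, (sigma k < sigma k.+1)%N) /\ forall k, (u (sigma k) <= u (sigma k.+1))%N.
Proof.
have [next nextP] := choice _ (ex_min_after u).
exists (fun k => iter k.+1 next 0%N); split=> k /=.
  by case: (nextP (iter k.+1 next 0%N)).
set i := iter k next 0%N; have [lt_next_i min_next_i] := nextP i.
by apply: min_next_i; case: (nextP (next i)) => /(ltn_trans lt_next_i).
Qed.

Lemma dickson n (u : nat -> 'X_{1..n}) : exists i j, (i < j)%N /\ (u i <= u j)%MM.
Proof.
suff [sigma [sigma_lt sigma_le]] : exists sigma : nat -> nat,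
    (forall k, (sigma k < sigma k.+1)%N) /\
    forall (l : 'I_n) k, (u (sigma k) l <= u (sigma k.+1) l)%N.
  by exists (sigma 0%N), (sigma 1%N); split=> //; apply/mnm_lepP.
suff coords c : (c <= n)%N -> exists sigma : nat -> nat,
    (forall k, (sigma k < sigma k.+1)%N) /\
    forall (l : 'I_n) k, (l < c)%N -> (u (sigma k) l <= u (sigma k.+1) l)%N.
  by have [sigma [? le_n]] := coords n (leqnn n); exists sigma; split=> // l k; apply: le_n.
elim: c => [_|c IH lt_cn]; first by exists id.
have [sigma [sigma_lt sigma_le]] := IH (ltnW lt_cn).
have [tau [tau_lt tau_le]] := nondecreasing_subseq (fun k => u (sigma k) (Ordinal lt_cn)).
have sigma_mono : {homo sigma : i j / (i < j)%N}.
  by apply: homo_ltn => //; apply: ltn_trans.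
exists (sigma \o tau); split=> [k|l k]; first exact/sigma_mono/tau_lt.
rewrite ltnS leq_eqVlt => /orP[/eqP lc|lt_lc].
  have -> : l = Ordinal lt_cn by exact: val_inj.
  exact: tau_le.
have u_mono : {homo (fun k => u (sigma k) l) : i j / (i <= j)%N}.
  by apply: homo_leq => [k'|y x z|k']; [exact: leqnn | exact: leq_trans | exact: sigma_le].
exact/u_mono/ltnW.
Qed.

Lemma wf_no_descending_chain (T : Type) (r : T -> T -> Prop) :
  (forall u : nat -> T, ~ forall k, r (u k.+1) (u k)) -> well_founded r.
Proof.
move=> no_chain x0; apply: NNPP => not_acc0.
have step x : exists y, ~ Acc r x -> r y x /\ ~ Acc r y.
  have [acc_x|not_acc_x] := classic (Acc r x); first by exists x.
  apply: NNPP => no_y; apply: not_acc_x; constructor => y ryx.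
  by apply: NNPP => not_acc_y; apply: no_y; exists y.
have [next nextP] := choice _ step.
have not_acc k : ~ Acc r (iter k next x0) by elim: k => //= k /nextP[].
by apply: (no_chain (fun k => iter k next x0)) => k; case: (nextP _ (not_acc k)).
Qed.

Section MonomialOrder.
Variables (n : nat) (lt : rel 'X_{1..n}).
Hypothesis lt_mo : monomial_order lt.

Lemma mo_irr m : ~~ lt m m. Proof. by case: lt_mo. Qed.

Lemma mo_trans m1 m2 m3 : lt m1 m2 -> lt m2 m3 -> lt m1 m3.
Proof. by case: lt_mo => _ + _ _ _; apply. Qed.

Lemma mo_total m1 m2 : m1 != m2 -> lt m1 m2 || lt m2 m1.
Proof. by case: lt_mo => _ _ + _ _; apply. Qed.

Lemma mo_asym m1 m2 : lt m1 m2 -> ~~ lt m2 m1.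
Proof. by move=> lt12; apply/negP => /(mo_trans lt12); apply/negP/mo_irr. Qed.

Lemma mo_lt_add2l g f e : lt (g + f)%MM (g + e)%MM = lt f e.
Proof.
have mo_add f' e' : lt f' e' -> lt (g + f')%MM (g + e')%MM.
  by case: lt_mo => _ _ _ + _; apply.
apply/idP/idP => [lt_gfe|]; last exact: mo_add.
have [fe|/mo_total/orP[//|/(mo_add)/mo_asym]] := eqVneq f e.
  by rewrite fe (negbTE (mo_irr _)) in lt_gfe.
by rewrite lt_gfe.
Qed.

Lemma mo_lt_add2r g f e : lt (f + g)%MM (e + g)%MM = lt f e.
Proof. by rewrite ![(_ + g)%MM]addmC mo_lt_add2l. Qed.

Lemma mo_ge0 d : (d == 0%MM) || lt 0%MM d.
Proof.
pose nonneg d := (d == 0%MM) || lt 0%MM d; rewrite -/(nonneg d).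
have nonnegD a b : nonneg a -> nonneg b -> nonneg (a + b)%MM.
  case/orP=> [/eqP-> | a_gt0]; first by rewrite add0m.
  case/orP=> [/eqP-> | b_gt0]; first by rewrite addm0 /nonneg a_gt0 orbT.
  by rewrite /nonneg (mo_trans a_gt0) ?orbT // -{1}[a]addm0 mo_lt_add2l.
rewrite [d]multinomUE_id; apply: (big_ind nonneg) => [|//|i _]; first by rewrite /nonneg eqxx.
elim: (d i) => [|k IH]; first by rewrite mulm0n /nonneg eqxx.
by rewrite mulmS; apply: nonnegD IH; rewrite /nonneg; case: lt_mo => _ _ _ _ ->; rewrite orbT.
Qed.

Lemma mo_nlt_addr m d : ~~ lt (m + d)%MM m.
Proof.
case/orP: (mo_ge0 d) => [/eqP->|d_gt0]; first by rewrite addm0 mo_irr.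
by apply: mo_asym; rewrite -{1}[m]addm0 mo_lt_add2l.
Qed.

Lemma mo_wf : well_founded (fun m1 m2 => lt m1 m2).
Proof.
apply: wf_no_descending_chain => u desc.
have u_lt i j : (i < j)%N -> lt (u j) (u i).
  elim: j => // j IH; rewrite ltnS leq_eqVlt => /orP[/eqP->|/IH]; first exact: desc.
  exact: mo_trans (desc j).
have [i [j [ij /submK uij]]] := dickson u.
by move: (u_lt _ _ ij); rewrite -uij addmC (negbTE (mo_nlt_addr _ _)).
Qed.

End MonomialOrder.

Section GreatestMonomial.
Variables (n : nat) (lt : rel 'X_{1..n}).
Hypothesis lt_mo : monomial_order lt.

Lemma has_greatest (s : seq 'X_{1..n}) : s != [::] ->
  exists2 M, M \in s & all (fun m => (m == M) || lt m M) s.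
Proof.
elim: s => [//|x s IH _].
have [->|/IH[M Ms Mgt]] := eqVneq s [::]; first by exists x; rewrite ?mem_seq1 /= eqxx.
have [->|neq_xM] := eqVneq x M; first by exists M; rewrite /= ?inE ?eqxx ?Mgt.
case/orP: (mo_total lt_mo neq_xM) => [lt_xM|lt_Mx].
  by exists M; rewrite /= ?inE ?Ms ?lt_xM ?Mgt ?orbT.
exists x; first by rewrite inE eqxx.
rewrite /= eqxx /=; apply/allP => m /(allP Mgt)/orP[/eqP->|/(mo_trans lt_mo)/(_ lt_Mx)->];
  by rewrite ?lt_Mx orbT.
Qed.

Variable R : nzRingType.
Implicit Types f p : {mpoly R[n]}.

Lemma greatestP f M :
  reflect (f@_M != 0 /\ forall m, lt M m -> f@_m = 0) (greatest_mono lt f M).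
Proof.
apply: (iffP andP) => [[Mf /allP Mgt]|[nzM topM]].
  split=> [|m lt_Mm]; first by rewrite -mcoeff_msupp.
  apply/eqP; rewrite -[_ == 0]negbK -mcoeff_msupp; apply/negP => /Mgt/orP[/eqP eq_mM|lt_mM].
    by rewrite eq_mM (negbTE (mo_irr lt_mo M)) in lt_Mm.
  by move: (mo_asym lt_mo lt_Mm); rewrite lt_mM.
split; first by rewrite mcoeff_msupp.
apply/allP => m; rewrite mcoeff_msupp; have [//|neq_mM] := eqVneq m M.
by case/orP: (mo_total lt_mo neq_mM) => // /topM ->; rewrite eqxx.
Qed.

Lemma mcoeffZX_gt (c : R) E m : lt E m -> (c *: 'X_[E])@_m = 0.
Proof.
rewrite mcoeffZ mcoeffX; have [->|_ _] := eqVneq E m; last by rewrite mulr0.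
by rewrite (negbTE (mo_irr lt_mo m)).
Qed.

Lemma greatest_mono_neq0 f M : greatest_mono lt f M -> f != 0.
Proof. by case/greatestP => nzM _; apply: contraNneq nzM => ->; rewrite mcoeff0. Qed.

Lemma greatest_mono_uniq f M1 M2 :
  greatest_mono lt f M1 -> greatest_mono lt f M2 -> M1 = M2.
Proof.
move=> /greatestP[nz1 top1] /greatestP[nz2 top2]; apply/eqP; apply: contraT => neq12.
by case/orP: (mo_total lt_mo neq12) => [/top1 z2|/top2 z1];
  [move: nz2; rewrite z2 | move: nz1; rewrite z1]; rewrite eqxx.
Qed.

Lemma exists_greatest f : f != 0 -> exists M, greatest_mono lt f M.
Proof.
by rewrite -msupp_eq0 => /(has_greatest) [M Mf Mgt]; exists M; apply/andP.
Qed.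

Lemma init_termE f M : greatest_mono lt f M -> init_term lt f = f@_M *: 'X_[M].
Proof.
move=> topM; rewrite /init_term -big_filter.
suff -> : [seq m <- msupp f | greatest_mono lt f m] = [:: M] by rewrite big_seq1.
rewrite -(filter_pred1_uniq (msupp_uniq f)); last by case/andP: topM.
apply: eq_in_filter => m _ /=; apply/idP/eqP => [/(greatest_mono_uniq topM)//|->//].
Qed.

Lemma mcoeffXM p m k :
  ('X_[m] * p)@_k = if (m <= k)%MM then p@_(k - m)%MM else 0.
Proof.
rewrite -commr_mpolyX; case: ifPn => [le_mk|].
  by rewrite -{1}(submK le_mk) addmC mcoeffMX.
apply: contraNeq; rewrite -mcoeff_msupp (perm_mem (msuppMX p m)) => /mapP[k' _ ->].
exact: lem_addr.
Qed.

End GreatestMonomial.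

Lemma greatest_monoZ n (lt : rel 'X_{1..n}) (R : idomainType) (c : R) p M :
  c != 0 -> greatest_mono lt (c *: p) M = greatest_mono lt p M.
Proof.
move=> /(msuppZ p) supp_cp.
by rewrite /greatest_mono (perm_mem supp_cp) (perm_all _ supp_cp).
Qed.

Lemma greatest_mono_map n (lt : rel 'X_{1..n}) (R S : nzRingType)
    (phi : {rmorphism R -> S}) (f : {mpoly R[n]}) M :
  monomial_order lt -> greatest_mono lt f M -> phi (f@_M) != 0 ->
  greatest_mono lt (map_mpoly phi f) M.
Proof.
move=> lt_mo /(greatestP lt_mo)[_ topM] nzM; apply/(greatestP lt_mo).
rewrite mcoeff_map_mpoly; split=> // m /topM.
by rewrite mcoeff_map_mpoly => ->; exact: rmorph0.
Qed.

Section MpolyIdeal.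
Variables (n : nat) (R : comNzRingType).
Implicit Types J : {mpoly R[n]} -> Prop.

Lemma mpoly_idealP J : J 0 -> (forall x y, J x -> J y -> J (x + y)) ->
  (forall c m x, J x -> J (c *: 'X_[m] * x)) -> is_ideal J.
Proof.
move=> J0 JD JXM; split=> // r x Jx; rewrite (mpolyE r) mulr_suml.
by apply: (big_ind J) => // m _; apply: JXM.
Qed.

Lemma mpoly_idealZ J c f : is_ideal J -> J f -> J (c *: f).
Proof. by move=> idJ Jf; rewrite -mul_mpolyC; apply: idealMl idJ _ _ Jf. Qed.

Lemma coef_pred_ideal J E : is_ideal J -> is_ideal (fun c => J (c *: 'X_[E])).
Proof.
move=> idJ; split=> [|a b Ja Jb|r a Ja]; rewrite ?scale0r ?scalerDl -?scalerA.
- exact: ideal0.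
- exact: idealD.
- exact: mpoly_idealZ.
Qed.

End MpolyIdeal.

Section InitialIdeal.
Variables (A : comNzRingType) (n : nat) (lt : rel 'X_{1..n}).
Hypothesis lt_mo : monomial_order lt.
Variable I : {mpoly A[n]} -> Prop.
Hypothesis idI : is_ideal I.

Local Notation inI := (init_ideal lt I).

Lemma term_mem_init f E :
  I f -> (forall m, lt E m -> f@_m = 0) -> inI (f@_E *: 'X_[E]).
Proof.
move=> If topE; have [->|nzE] := eqVneq f@_E 0.
  by rewrite scale0r; apply: ideal0 (ideal_gen_ideal _).
have gE : greatest_mono lt f E by apply/(greatestP lt_mo).
apply: mem_ideal_gen; exists f; split=> //; split; first exact: greatest_mono_neq0 gE.
by rewrite (init_termE lt_mo gE).
Qed.

Lemma monomial_mem_init c E : I (c *: 'X_[E]) -> inI (c *: 'X_[E]).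
Proof.
move=> IcX; suff: inI ((c *: 'X_[E])@_E *: 'X_[E]) by rewrite mcoeffZ mcoeffX eqxx mulr1.
by apply: term_mem_init IcX _ => m; apply: mcoeffZX_gt.
Qed.

Definition lifts_at (h : {mpoly A[n]}) E :=
  exists f, [/\ I f, f@_E = h@_E & forall m, lt E m -> f@_m = 0].

Lemma lifts_at_ideal : is_ideal (fun h => forall E, lifts_at h E).
Proof.
apply: mpoly_idealP => [E|x y liftx lifty E|c m x liftx E].
- by exists 0; split=> [||m _]; rewrite ?mcoeff0 //; apply: ideal0.
- have [f [If fE ftop]] := liftx E; have [g [Ig gE gtop]] := lifty E.
  exists (f + g); split; [exact: idealD | by rewrite !mcoeffD fE gE |].
  by move=> m lt_Em; rewrite mcoeffD ftop ?gtop ?addr0.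
rewrite /lifts_at -scalerAl mcoeffZ mcoeffXM; case: ifPn => [le_mE|_]; last first.
  by exists 0; split=> [||m' _]; rewrite ?mcoeff0 ?mulr0 //; apply: ideal0.
have [f [If fE ftop]] := liftx (E - m)%MM.
exists (c *: ('X_[m] * f)); split.
- by apply/(mpoly_idealZ c idI)/(idealMl idI).
- by rewrite mcoeffZ mcoeffXM le_mE fE.
move=> k lt_Ek; rewrite mcoeffZ mcoeffXM; case: ifPn => [le_mk|_]; last by rewrite mulr0.
by rewrite ftop ?mulr0 // -(mo_lt_add2r lt_mo m) !submK.
Qed.

Lemma init_ideal_lifts h E : inI h -> lifts_at h E.
Proof.
move=> inIh; move: E; apply: (ideal_gen_min lifts_at_ideal) inIh => _ [f [If [nz ->]]] E.
have [M gM] := exists_greatest lt_mo nz; rewrite (init_termE lt_mo gM).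
have [<-|neq_ME] := eqVneq M E.
  exists f; split=> //; first by rewrite mcoeffZ mcoeffX eqxx mulr1.
  by case/(greatestP lt_mo): gM.
exists 0; split=> [||m _]; rewrite ?mcoeff0 //; first exact: ideal0.
by rewrite mcoeffZ mcoeffX (negbTE neq_ME) mulr0.
Qed.

End InitialIdeal.

Lemma map_init_ideal (A K : comNzRingType) n (lt : rel 'X_{1..n})
    (phi : {rmorphism A -> K}) (I : {mpoly A[n]} -> Prop) h :
  monomial_order lt -> init_ideal lt I h ->
  init_ideal lt (ext_mpoly_ideal phi I) (map_mpoly phi h).
Proof.
move=> lt_mo; have idJ : is_ideal (init_ideal lt (ext_mpoly_ideal phi I)) := ideal_gen_ideal _.
apply: (ideal_gen_min (preim_ideal (map_mpoly phi) idJ)) => _ [f [If [nz ->]]].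
have [M topM] := exists_greatest lt_mo nz.
rewrite /= (init_termE lt_mo topM) map_mpolyZ map_mpolyX.
have [->|nz_phiM] := eqVneq (phi f@_M) 0; first by rewrite scale0r; exact: ideal0.
have topM' := greatest_mono_map lt_mo topM nz_phiM.
apply: mem_ideal_gen; exists (map_mpoly phi f); split; first by apply: mem_ideal_gen; exists f.
split; first exact: (greatest_mono_neq0 (R := K) lt_mo topM').
by rewrite (init_termE lt_mo topM') mcoeff_map_mpoly.
Qed.

Section LocalQuotient.
Variables (A : comNzRingType) (n : nat) (I : {mpoly A[n]} -> Prop) (P : A -> Prop).
Variables (B : comPzRingType) (psi : {rmorphism A -> B}).
Hypotheses (primeP : is_prime_ideal P) (locB : is_loc_quot P I psi).

Lemma loc_quot_kernel a : psi a = 0 -> exists2 t, ~ P t & I ((t * a)%:MP).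
Proof. by move=> psia0; case: locB => _ /(_ a)[/(_ psia0)[t []]]; exists t. Qed.

Lemma loc_quot_ext1 (C : A -> Prop) : is_ideal C -> (forall a, I a%:MP -> C a) ->
  ext_ideal psi C 1 -> exists2 d, ~ P d & C d.
Proof.
move=> idC IC ext1.
pose D b := exists c s, [/\ C c, ~ P s & b * psi s = psi c].
have idD : is_ideal D.
  split=> [|x y|r x].
  - by exists 0, 1; rewrite !rmorph0 mul0r; split=> //; [exact: ideal0 | exact: prime_nmem1].
  - move=> [c1 [s1 [Cc1 nPs1 e1]]] [c2 [s2 [Cc2 nPs2 e2]]].
    exists (c1 * s2 + c2 * s1), (s1 * s2); split.
    + by apply: (idealD idC); apply: (idealMr idC).
    + exact: prime_nmemM.
    + by rewrite rmorphD !rmorphM -e1 -e2 mulrDl !mulrA [y * _ * _]mulrAC.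
  - move=> [c [s [Cc nPs e]]]; case: locB => _ _ /(_ r)[a [u [nPu eu]]].
    exists (a * c), (u * s); split; [exact: idealMl | exact: prime_nmemM |].
    by rewrite !rmorphM -e -eu mulrACA.
have [c [s [Cc nPs]]] : D 1.
  apply: (ideal_gen_min idD _ ext1) => _ [c [Cc ->]].
  by exists c, 1; rewrite rmorph1 mulr1; split=> //; exact: prime_nmem1 primeP.
rewrite mul1r => /eqP; rewrite -subr_eq0 -rmorphB => /eqP /loc_quot_kernel[t nPt It].
exists (t * s); first exact: prime_nmemM.
have -> : t * s = t * (s - c) + t * c by rewrite mulrBr subrK.
by apply: (idealD idC); [apply: IC | apply: (idealMl idC)].
Qed.

End LocalQuotient.

Section ResidueField.
Variables (A : comNzRingType) (n : nat) (I : {mpoly A[n]} -> Prop) (P : A -> Prop).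
Variables (K : fieldType) (phi : {rmorphism A -> K}).
Hypotheses (idI : is_ideal I) (primeP : is_prime_ideal P) (resK : is_residue_field P phi).

Lemma residue_eq0 a : phi a = 0 <-> P a. Proof. by case: resK. Qed.

Lemma residue_neq0 a : ~ P a -> phi a != 0.
Proof. by move=> nPa; apply/eqP => /residue_eq0. Qed.

Lemma ext_mpoly_ideal_fraction g : ext_mpoly_ideal phi I g ->
  exists s f, [/\ ~ P s, I f & map_mpoly phi f = phi s *: g].
Proof.
pose Q g := exists s f, [/\ ~ P s, I f & map_mpoly phi f = phi s *: g].
have idQ : is_ideal Q.
  apply: mpoly_idealP => [|x y|k m x].
  - by exists 1, 0; rewrite rmorph0 scaler0; split; [exact: prime_nmem1 | exact: ideal0 |].
  - move=> [s1 [f1 [nPs1 If1 e1]]] [s2 [f2 [nPs2 If2 e2]]].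
    exists (s1 * s2), (s2 *: f1 + s1 *: f2); split; first exact: prime_nmemM.
      by apply: (idealD idI); apply: mpoly_idealZ.
    by rewrite rmorphD /= !map_mpolyZ e1 e2 !scalerA rmorphM scalerDr [phi s2 * _]mulrC.
  move=> [s [f [nPs If e]]]; have [_ /(_ k)[a [t [nPt et]]]] := resK.
  exists (t * s), (a *: ('X_[m] * f)); split; first exact: prime_nmemM.
    by apply/(mpoly_idealZ a idI)/(idealMl idI).
  rewrite map_mpolyZ [map_mpoly _ (_ * _)]rmorphM /= map_mpolyX e.
  rewrite -scalerAr scalerA -et rmorphM.
  by rewrite -!scalerAl !scalerA; congr (_ *: _); rewrite [RHS]mulrC mulrA.
apply: (ideal_gen_min idQ) => _ [f [If ->]].
by exists 1, f; rewrite rmorph1 scale1r; split=> //; exact: prime_nmem1.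
Qed.

End ResidueField.

Section Descent.
Variables (A : comNzRingType) (n : nat) (lt : rel 'X_{1..n}).
Variables (I : {mpoly A[n]} -> Prop) (P : A -> Prop).
Variables (B : comPzRingType) (psi : {rmorphism A -> B}).
Variables (K : fieldType) (phi : {rmorphism A -> K}).
Hypotheses (lt_mo : monomial_order lt) (idI : is_ideal I) (primeP : is_prime_ideal P).
Hypotheses (locB : is_loc_quot P I psi) (resK : is_residue_field P phi).

Local Notation inI := (init_ideal lt I).

Hypothesis coef_trivial : forall E,
  (forall b, ext_ideal psi (coef_ideal inI E) b -> b = 0) \/
  ext_ideal psi (coef_ideal inI E) 1.

Lemma cancel_top_term f E : I f -> (forall m, lt E m -> f@_m = 0) -> P f@_E ->
  exists a g, [/\ ~ P a, I g, g@_E = a * f@_E,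
                  (forall m, lt E m -> g@_m = 0) & forall m, P g@_m].
Proof.
move=> If topE Pc; set c := f@_E.
have idC := coef_pred_ideal E (ideal_gen_ideal _ : is_ideal inI).
have idP := prime_ideal_ideal primeP.
case: (coef_trivial E) => [ext0|ext1].
  have inIc : inI (c *: 'X_[E]) := term_mem_init lt_mo If topE.
  have /ext0/(loc_quot_kernel locB)[t nPt Itc] : ext_ideal psi (coef_ideal inI E) (psi c).
    by apply: mem_ideal_gen; exists c; split=> //; apply: mem_ideal_gen.
  exists t, ((t * c) *: 'X_[E]); split=> [//| | |m lt_Em|m].
  - by rewrite -mul_mpolyC mulrC; apply: idealMl.
  - by rewrite mcoeffZ mcoeffX eqxx mulr1.
  - exact: (mcoeffZX_gt (R := A) lt_mo).
  - by rewrite mcoeffZ; apply/(idealMr idP)/(idealMl idP).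
have [d nPd inId] : exists2 d, ~ P d & inI (d *: 'X_[E]).
  apply: (loc_quot_ext1 primeP locB idC) => [a Ia|]; last first.
    by apply: ext_ideal_sub ext1 => x; apply: ideal_gen_min idC _ x => y.
  apply: (monomial_mem_init lt_mo); rewrite -mul_mpolyC mulrC; exact: idealMl.
have [g [Ig gE gtop]] := init_ideal_lifts lt_mo idI E inId.
exists d, (c *: g); split=> [//| | |m /gtop|m]; rewrite ?mcoeffZ.
- exact: mpoly_idealZ.
- by rewrite gE mcoeffZ mcoeffX eqxx mulr1 mulrC.
- by move=> ->; rewrite mulr0.
- exact: idealMr.
Qed.

Lemma residue_lead_lift E E' f : I f -> greatest_mono lt (map_mpoly phi f) E ->
  (forall m, lt E' m -> f@_m = 0) ->
  exists f', [/\ I f', greatest_mono lt (map_mpoly phi f') E & forall m, lt E m -> f'@_m = 0].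
Proof.
elim/(well_founded_ind (mo_wf lt_mo)): E' f => E' IH f If lead_f topE'.
have [lt_EE'|nlt_EE'] := boolP (lt E E'); last first.
  exists f; split=> // m lt_Em; apply: topE'.
  have [<-//|/(mo_total lt_mo)/orP[lt_EE'|lt_E'E]] := eqVneq E E'.
    by rewrite lt_EE' in nlt_EE'.
  exact: mo_trans lt_E'E lt_Em.
have PfE' : P f@_E'.
  apply/(residue_eq0 resK); rewrite -mcoeff_map_mpoly.
  by case/(greatestP lt_mo): lead_f => _; apply.
have [a [g [nPa Ig gE' gtop Pg]]] := cancel_top_term If topE' PfE'.
set f1 := a *: f - g.
have map_g : map_mpoly phi g = 0.
  by apply/mpolyP => m; rewrite mcoeff_map_mpoly mcoeff0; apply/(residue_eq0 resK).
have map_f1 : map_mpoly phi f1 = phi a *: map_mpoly phi f.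
  by rewrite /f1 raddfB /= map_mpolyZ map_g subr0.
have lead_f1 : greatest_mono lt (map_mpoly phi f1) E.
  by rewrite map_f1 greatest_monoZ // (residue_neq0 resK).
have f1_low m : ~~ lt m E' -> f1@_m = 0.
  rewrite /f1 mcoeffB mcoeffZ; have [->|/(mo_total lt_mo)/orP[->//|lt_E'm]] := eqVneq m E'.
    by rewrite gE' subrr.
  by rewrite topE' ?gtop ?mulr0 ?subrr.
have f1_nz : f1 != 0.
  apply: contraTneq lead_f1 => ->; rewrite rmorph0.
  by apply/negP => /(greatest_mono_neq0 lt_mo)/eqP.
have [M topM] := exists_greatest lt_mo f1_nz.
have [nzM f1_top] := greatestP lt_mo _ _ topM.
have lt_ME' : lt M E' by apply: contraTT nzM => /f1_low ->; rewrite eqxx.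
apply: (IH M lt_ME' f1) => //; exact/(idealB idI)/Ig/(mpoly_idealZ a idI).
Qed.

Lemma init_term_ext_mem g : ext_mpoly_ideal phi I g -> g != 0 ->
  ext_mpoly_ideal phi inI (init_term lt g).
Proof.
move=> Ig nz; have [E topE] := exists_greatest lt_mo nz; rewrite (init_termE lt_mo topE).
have [s [f [nPs If map_f]]] := ext_mpoly_ideal_fraction idI primeP resK Ig.
have lead_f : greatest_mono lt (map_mpoly phi f) E.
  by rewrite map_f greatest_monoZ // (residue_neq0 resK).
have f_nz : f != 0.
  by apply: contraNneq (greatest_mono_neq0 lt_mo lead_f) => ->; rewrite raddf0.
have [M /(greatestP lt_mo)[_ topM]] := exists_greatest lt_mo f_nz.
have [f' [If' lead_f' topE']] := residue_lead_lift If lead_f topM.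
have nz_phiE : phi f'@_E != 0.
  by rewrite -mcoeff_map_mpoly; case/(greatestP lt_mo): lead_f'.
have mem_f'E : ext_mpoly_ideal phi inI (phi f'@_E *: 'X_[E]).
  apply: mem_ideal_gen; exists (f'@_E *: 'X_[E]); split; first exact: term_mem_init.
  by rewrite map_mpolyZ map_mpolyX.
rewrite -[g@_E](divfK nz_phiE) -scalerA -mul_mpolyC.
exact: idealMl (ideal_gen_ideal _) _ _ mem_f'E.
Qed.

End Descent.

Theorem proposition3p13
    (A : comNzRingType) (n : nat) (lt : rel 'X_{1..n})
    (I : {mpoly A[n]} -> Prop) (P : A -> Prop)
    (B : comPzRingType) (psi : {rmorphism A -> B})
    (K : fieldType) (phi : {rmorphism A -> K}) :
  noetherian A ->
  monomial_order lt ->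
  is_ideal I ->
  is_prime_ideal P ->
  is_loc_quot P I psi ->
  is_residue_field P phi ->
  (forall E : 'X_{1..n},
      (forall b, ext_ideal psi (coef_ideal (init_ideal lt I) E) b -> b = 0)
      \/ ext_ideal psi (coef_ideal (init_ideal lt I) E) 1) ->
  forall g : {mpoly K[n]},
    ext_mpoly_ideal phi (init_ideal lt I) g <->
    init_ideal lt (ext_mpoly_ideal phi I) g.
Proof.
move=> _ lt_mo idI primeP locB resK coef_trivial g; split.
- apply: ideal_gen_min; first exact: ideal_gen_ideal.
  by move=> _ [h [inIh ->]]; exact: map_init_ideal.
- apply: ideal_gen_min; first exact: ideal_gen_ideal.
  by move=> _ [g0 [Ig0 [nz ->]]]; exact: (init_term_ext_mem lt_mo idI primeP locB resK).
Qed.
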